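(* Let $d\ge 2$ and let $|\psi^{(r)}\rangle_{DA}=\sum_{i=0}^{d-1}\alpha_i|i\rangle_D|i\oplus r\rangle_A$ be a pure state of a dit/anti-dit $(1,1)$-composite ($r\in\{0,\dots,d-1\}$, $\sum_i|\alpha_i|^2=1$) which is entangled, i.e. at least two of the $\alpha_i$ are nonzero. Consider two copies $|\psi^{(r)}\rangle_{D_1A_1}\otimes|\psi^{(r)}\rangle_{D_2A_2}$, with Alice holding $D_1A_2$ and Bob holding $D_2A_1$. Then there exist two-outcome valid measurements $A_0,A_1$ on the $(1,1)$-composite $D_1A_2$ and $B_0,B_1$ on the $(1,1)$-composite $D_2A_1$ whose CHSH value $F=\langle A_0B_0\rangle+\langle A_0B_1\rangle+\langle A_1B_0\rangle-\langle A_1B_1\rangle$ on this state is strictly larger than $2$. Specifically, if $\alpha_0,\alpha_1>0$ are real, set $\alpha'=\alpha_0^2$, $\beta'=\alpha_1^2$, $|{\uparrow}\rangle=|0\rangle_{D_1}|r\rangle_{A_2}$, $|{\downarrow}\rangle=|1\rangle_{D_1}|1\oplus r\rangle_{A_2}$, $|{\uparrow'}\rangle=|0\rangle_{D_2}|r\rangle_{A_1}$, $|{\downarrow'}\rangle=|1\rangle_{D_2}|1\oplus r\rangle_{A_1}$, and $\theta\in(0,\pi/2]$ with $\tan\theta=2\alpha'\beta'/(\alpha'^2+\beta'^2)$; let $A_0,A_1,B_0,B_1$ have $+1$-outcome operators $a_0=|{\uparrow}\rangle\langle{\uparrow}|$, $a_1=\tfrac12(|{\uparrow}\rangle+|{\downarrow}\rangle)(\langle{\uparrow}|+\langle{\downarrow}|)$,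 $b_{0}=\tfrac{1}{2\cos\theta+2}|u_+\rangle\langle u_+|$, $b_1=\tfrac{1}{2\cos\theta+2}|u_-\rangle\langle u_-|$ with $|u_\pm\rangle=(\cos\theta+1)|{\uparrow'}\rangle\pm\sin\theta|{\downarrow'}\rangle$, and $-1$-outcome operators $I-a_x$, $I-b_y$. These are valid measurements and $$F=2+2(\alpha'^2+\beta'^2)\left(\sqrt{1+\frac{4\alpha'^2\beta'^2}{(\alpha'^2+\beta'^2)^2}}-1\right)>2.$$
   Context: Fix an integer $d\ge2$. A dit $D$ and an anti-dit $A$ are each associated with $\mathbb C^d$ with computational orthonormal basis $\{|0\rangle,\dots,|d-1\rangle\}$; $\oplus$ denotes addition modulo $d$. For a dit $D$ and anti-dit $A$ and $k\in\{0,\dots,d-1\}$, the parity-$k$ subspace is $\mathrm{span}\{|s\rangle_D|s\oplus k\rangle_A:s=0,\dots,d-1\}$; the pure states of the $(1,1)$-composite $DA$ are unit vectors lying in a single parity subspace. For two dits $D_1,D_2$ and two anti-dits $A_1,A_2$, pure states are unit vectors of the form $(U\otimes W)|\Psi'\rangle$ with $U$ permuting the dit tensor factors, $W$ permuting the anti-dit tensor factors, and $|\Psi'\rangle$ lying in a single parity subspace of $D_1A_1$ tensored with a single parity subspace of $D_2A_2$. States are convex combinations of projectors onto pure states. A valid measurement on a composite is a POVM whose elements are linear combinations with nonnegative coefficients of projectors onto pure states of that composite; outcome probabilities are $\mathrm{Tr}[P\rho]$. For a two-outcome measurement $X$ with outcomes $\pm1$ for Alice and $Y$ for Bob, $\langle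 XY\rangle=\sum_{a,b=\pm1}ab\,p(a,b\mid X,Y)$. *)

From mathcomp Require Import all_boot all_order all_algebra.
From mathcomp Require Import reals trigo.
From mathcomp Require Import complex.
Set Implicit Arguments. Unset Strict Implicit. Unset Printing Implicit Defensive.
Import Order.TTheory GRing.Theory Num.Theory.
Local Open Scope ring_scope.
Local Open Scope complex_scope.

Definition ket (R : realType) (T : finType) := T -> R[i].
Definition op (R : realType) (T : finType) := T -> T -> R[i].

Definition bket {R : realType} {T : finType} (x : T) : ket R T :=
  fun y => (y == x)%:R.
Definition kadd (R : realType) (T : finType) (u v : ket R T) : ket R T :=
  fun x => u x + v x.
Definition ksub (R : realType) (T : finType) (u v : ket R T) : ket R T :=
  fun x => u x - v x.
Definition kscale (R : realType) (T : finType) (c : R[i]) (u : ket R T) : ket R T :=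
  fun x => c * u x.
Definition knorm2 (R : realType) (T : finType) (v : ket R T) : R[i] :=
  \sum_x `|v x| ^+ 2.
Definition proj (R : realType) (T : finType) (v : ket R T) : op R T :=
  fun x y => v x * (v y)^*.
Definition idop {R : realType} {T : finType} : op R T := fun x y => (x == y)%:R.
Definition opsub (R : realType) (T : finType) (A B : op R T) : op R T :=
  fun x y => A x y - B x y.
Definition opscale (R : realType) (T : finType) (c : R[i]) (A : op R T) : op R T :=
  fun x y => c * A x y.
Definition opmul (R : realType) (T : finType) (A B : op R T) : op R T :=
  fun x y => \sum_z A x z * B z y.
Definition trace (R : realType) (T : finType) (A : op R T) : R[i] := \sum_x A x x.

Definition oplus (d : nat) (s k : 'I_d) : 'I_d :=
  Ordinal (ltn_pmod (s + k) (leq_ltn_trans (leq0n s) (ltn_ord s))).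

(* index type of a (1,1)-composite: first component = dit, second = anti-dit *)
Notation DA d := ('I_d * 'I_d)%type.

Definition in_parity (R : realType) (d : nat) (k : 'I_d) (v : ket R (DA d)) : Prop :=
  forall s t : 'I_d, t != oplus s k -> v (s, t) = 0.

(* pure states of the (1,1)-composite: unit vectors in a single parity subspace *)
Definition pure11 (R : realType) (d : nat) (v : ket R (DA d)) : Prop :=
  knorm2 v = 1 /\ exists k : 'I_d, in_parity k v.

Definition pure_cone11 (R : realType) (d : nat) (E : op R (DA d)) : Prop :=
  exists (n : nat) (c : 'I_n -> R) (v : 'I_n -> ket R (DA d)),
    (forall m, 0 <= c m) /\ (forall m, pure11 (v m)) /\
    forall x y, E x y = \sum_(m < n) (c m)%:C * proj (v m) x y.

(* a two-outcome measurement: pair (E_{+1}, E_{-1}) of POVM elements *)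
Definition meas2 (R : realType) (d : nat) : Type := (op R (DA d) * op R (DA d))%type.

Definition valid_meas2 (R : realType) (d : nat) (X : meas2 R d) : Prop :=
  pure_cone11 X.1 /\ pure_cone11 X.2 /\
  forall x y, X.1 x y + X.2 x y = idop x y.

Definition tens (R : realType) (T1 T2 : finType) (u : ket R T1) (v : ket R T2)
  : ket R (T1 * T2)%type := fun p => u p.1 * v p.2.

(* P acting on Alice's (D1,A2), Q acting on Bob's (D2,A1), as an operator on
   ((D1,A1),(D2,A2)) *)
Definition aliceD1A2_bobD2A1 (R : realType) (d : nat) (P Q : op R (DA d))
  : op R (DA d * DA d)%type :=
  fun p q => P (p.1.1, p.2.2) (q.1.1, q.2.2) * Q (p.2.1, p.1.2) (q.2.1, q.1.2).

(* p(a,b|X,Y) = Tr[(P_a (x) Q_b) rho];  a = true means outcome +1 *)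
Definition outcome (R : realType) (d : nat) (X : meas2 R d) (a : bool) : op R (DA d) :=
  if a then X.1 else X.2.
Definition prob (R : realType) (d : nat) (X Y : meas2 R d) (a b : bool)
  (rho : op R (DA d * DA d)%type) : R[i] :=
  trace (opmul (aliceD1A2_bobD2A1 (outcome X a) (outcome Y b)) rho).

Definition sgnb (R : realType) (a : bool) : R[i] := if a then 1 else -1.

Definition correl (R : realType) (d : nat) (X Y : meas2 R d) (rho : op R (DA d * DA d)%type)
  : R[i] := \sum_(a : bool) \sum_(b : bool) sgnb R a * sgnb R b * prob X Y a b rho.

Definition CHSH (R : realType) (d : nat) (A0 A1 B0 B1 : meas2 R d)
  (rho : op R (DA d * DA d)%type) : R[i] :=
  correl A0 B0 rho + correl A0 B1 rho + correl A1 B0 rho - correl A1 B1 rho.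

Definition psi (R : realType) (d : nat) (r : 'I_d) (alpha : 'I_d -> R[i]) : ket R (DA d) :=
  fun p => if p.2 == oplus p.1 r then alpha p.1 else 0.

Definition two_copies (R : realType) (d : nat) (r : 'I_d) (alpha : 'I_d -> R[i])
  : op R (DA d * DA d)%type := proj (tens (psi r alpha) (psi r alpha)).

From mathcomp Require Import all_boot all_order all_algebra.
From mathcomp Require Import reals trigo.
From mathcomp Require Import complex.
From mathcomp Require Import ring zify.
Import Order.TTheory GRing.Theory Num.Theory.
Local Open Scope complex_scope.
Local Open Scope ring_scope.
Set Implicit Arguments. Unset Strict Implicit. Unset Printing Implicit Defensive.

(* Only the amplitudes on |i, i (+) r> and |j, j (+) r> matter.  With Alice on D1A2 and Bob on
   D2A1, the two copies restricted to these two levels on each side read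
   alpha_i^2 |ii> + alpha_j^2 |jj>, an entangled two-qubit state; absorbing the relative phase of
   alpha_i^2 and alpha_j^2 into Bob's second level leaves the real weights a = |alpha_i|^2 and
   b = |alpha_j|^2.  Every measurement used has outcome +1 given by a rank-one operator
   k |u><u| on that span, so <P (x) Q> = k l |<u (x) w|Psi>|^2 and each correlator is an explicit
   real polynomial.  The outcome -1 operator I - k |u><u| is the projector onto the orthogonal
   vector of the span plus the remaining basis projectors, hence also a valid effect.  The
   CHSH combination is 2 + 2 (a^2 + b^2) (cos theta - 1) + 4 a b sin theta, which for
   tan theta = 2 a b / (a^2 + b^2) is the stated value F > 2. *)

(* Stated on [R[i]] so that rewriting keeps [Num.conj] and [_%:C] as head symbols; the generic
   [rmorphM] exposes the underlying morphism structure instead. *)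
Section ComplexRewrite.
Variable R : realType.
Implicit Types (x : R) (z w : R[i]).

Lemma conjC_real x : x%:C^* = x%:C. Proof. exact: conjc_real. Qed.
Lemma conjCM z w : (z * w)^* = z^* * w^*. Proof. exact: rmorphM. Qed.
Lemma conjCD z w : (z + w)^* = z^* + w^*. Proof. exact: rmorphD. Qed.
Lemma conjCN z : (- z)^* = - z^*. Proof. exact: rmorphN. Qed.

Lemma realcD x y : (x + y)%:C = x%:C + y%:C. Proof. exact: rmorphD. Qed.
Lemma realcN x : (- x)%:C = - x%:C. Proof. exact: rmorphN. Qed.
Lemma realcM x y : (x * y)%:C = x%:C * y%:C. Proof. exact: rmorphM. Qed.
Lemma realcX x n : (x ^+ n)%:C = x%:C ^+ n. Proof. exact: rmorphXn. Qed.
Lemma realcV x : (x^-1)%:C = x%:C^-1. Proof. exact: fmorphV. Qed.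
Lemma realc_eq1 x : x = 1 -> x%:C = 1. Proof. by move->; rewrite rmorph1. Qed.
Lemma realc_nat n : (n%:R : R)%:C = n%:R. Proof. exact: rmorph_nat. Qed.

End ComplexRewrite.

Section PureCone.
Variables (R : realType) (d : nat).

Lemma pure_cone11_ext (E E' : op R (DA d)) :
  E =2 E' -> pure_cone11 E' -> pure_cone11 E.
Proof.
move=> EE' [n [c [v [c_ge0 [v_pure E'E]]]]].
by exists n, c, v; split=> //; split=> // x y; rewrite EE' E'E.
Qed.

Lemma pure_cone11_0 : pure_cone11 ((fun _ _ => 0) : op R (DA d)).
Proof.
exists 0%N, (fun _ => 0), (fun _ _ => 0).
split=> [_|]; first exact: lexx.
by split=> [[]|x y] //; rewrite big_ord0.
Qed.

Lemma pure_cone11D (E1 E2 : op R (DA d)) : pure_cone11 E1 -> pure_cone11 E2 ->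
  pure_cone11 (fun x y => E1 x y + E2 x y).
Proof.
move=> [n1 [c1 [v1 [c1_ge0 [v1_pure E1E]]]]] [n2 [c2 [v2 [c2_ge0 [v2_pure E2E]]]]].
exists (n1 + n2)%N,
  (fun m => match split m with inl a => c1 a | inr b => c2 b end),
  (fun m => match split m with inl a => v1 a | inr b => v2 b end).
split; first by move=> m; case: (split m).
split; first by move=> m; case: (split m).
move=> x y; rewrite big_split_ord /= E1E E2E.
by congr (_ + _); apply: eq_bigr => m _; rewrite ?(unsplitK (inl m)) ?(unsplitK (inr m)).
Qed.

Lemma pure_cone11_sum (I : finType) (E : I -> op R (DA d)) :
  (forall b, pure_cone11 (E b)) -> pure_cone11 (fun x y => \sum_(b : I) E b x y).
Proof.
move=> E_cone; rewrite /index_enum; elim: (Finite.enum I) => [|b s IH].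
  by apply: pure_cone11_ext pure_cone11_0 => x y; rewrite big_nil.
by apply: pure_cone11_ext (pure_cone11D (E_cone b) IH) => x y; rewrite big_cons.
Qed.

(* Rescaling [u] to a unit vector moves its squared norm [m] into the coefficient. *)
Lemma pure_cone11_proj (k : 'I_d) (u : ket R (DA d)) (c m : R) :
  0 <= c -> 0 < m -> in_parity k u -> knorm2 u = m%:C ->
  pure_cone11 (opscale c%:C (proj u)).
Proof.
move=> c_ge0 m_gt0 u_par u_norm.
pose t : R := (Num.sqrt m)^-1.
have tt : t * t = m^-1 by rewrite -invfM -expr2 sqr_sqrtr // ltW.
exists 1%N, (fun _ => c * m), (fun _ => kscale t%:C u).
split; first by move=> _; rewrite mulr_ge0 // ltW.
split=> [_|x y]; last first.
  rewrite big_ord1 /opscale /proj /kscale conjCM conjC_real.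
  have -> : (c * m)%:C * (t%:C * u x * (t%:C * (u y)^*)) =
            (c * (m * (t * t)))%:C * (u x * (u y)^*) by rewrite !realcM; ring.
  by rewrite tt mulfV ?gt_eqF // mulr1.
split; last by exists k => s s' /u_par; rewrite /kscale => ->; rewrite mulr0.
rewrite /knorm2.
under eq_bigr => x _ do rewrite /kscale normrM exprMn.
rewrite -mulr_sumr -/(knorm2 u) u_norm normCK conjC_real -!realcM tt.
by rewrite mulVf ?gt_eqF.
Qed.

Lemma bket_in_parity (b : DA d) : exists k, in_parity k (bket b : ket R (DA d)).
Proof.
case: b => s t; have d_gt0 : (0 < d)%N by apply: leq_ltn_trans (ltn_ord s).
exists (Ordinal (ltn_pmod (t + d - s) d_gt0)) => s' t' /eqP nt'.
rewrite /bket; case: eqP => // [[E1 E2]]; exfalso; apply: nt'; rewrite E1 E2.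
apply: val_inj => /=.
have ls := ltn_ord s; have lt := ltn_ord t.
by rewrite modnDmr (_ : s + (t + d - s) = t + d)%N ?modnDr ?modn_small //; lia.
Qed.

End PureCone.

Section Ket2.
Variables (R : realType) (T : finType).
Implicit Types (p q : R[i]) (G : T -> R[i]).

Definition ket2 (U V : T) p q : ket R T :=
  fun x => (x == U)%:R * p + (x == V)%:R * q.

Lemma opscale1 (A : op R T) : A =2 opscale 1 A.
Proof. by move=> x y; rewrite /opscale mul1r. Qed.

Lemma sum_eq_natr_mul (U : T) G : \sum_x (x == U)%:R * G x = G U.
Proof.
rewrite (bigD1 U) //= eqxx mul1r big1 ?addr0 // => x /negbTE ->.
by rewrite mul0r.
Qed.

Lemma sum_conj_bket (b : T) G : \sum_x (bket b x)^* * G x = G b.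
Proof. by under eq_bigr => x _ do rewrite conjC_nat; exact: sum_eq_natr_mul. Qed.

Lemma knorm2_bket (b : T) : knorm2 (bket b : ket R T) = 1.
Proof.
rewrite /knorm2 (bigD1 b) //= big1 => [|x /negbTE nx]; last first.
  by rewrite /bket nx normr0 expr0n.
by rewrite /bket eqxx normr1 expr1n addr0.
Qed.

Lemma idop_sum_proj : idop =2 fun x y : T => \sum_b proj (bket b : ket R T) x y.
Proof.
move=> x y; rewrite (bigD1 y) //= big1 => [|b /negbTE nb].
  by rewrite /proj /bket /idop eqxx conjC_nat mulr1 addr0.
by rewrite /proj /bket [y == b]eq_sym nb conjC0 mulr0.
Qed.

Variables (U V : T).
Hypothesis neqUV : U != V.

Lemma sum_conj_ket2 p q G :
  \sum_x (ket2 U V p q x)^* * G x = p^* * G U + q^* * G V.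
Proof.
under eq_bigr => x _ do rewrite conjCD !conjCM !conjC_nat mulrDl -!mulrA.
by rewrite big_split /= !sum_eq_natr_mul.
Qed.

Lemma sum_ket2_mul_conj p q :
  \sum_x ket2 U V p q x * (ket2 U V p q x)^* = p * p^* + q * q^*.
Proof.
under eq_bigr => x _ do rewrite mulrC.
rewrite sum_conj_ket2 /ket2 !eqxx (negbTE neqUV) [V == U]eq_sym (negbTE neqUV).
by rewrite /=; ring.
Qed.

Lemma knorm2_ket2 p q : knorm2 (ket2 U V p q) = p * p^* + q * q^*.
Proof.
by rewrite -sum_ket2_mul_conj; apply: eq_bigr => x _; rewrite normCK.
Qed.

Lemma natr_eq_split2 (x y : T) :
  (x == y)%:R = ((x != U) && (x != V))%:R * (x == y)%:R +
    (x == U)%:R * (y == U)%:R + (x == V)%:R * (y == V)%:R :> R[i].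
Proof.
have [<-|nxy] := eqVneq x y.
  have [->|_] := eqVneq x U; first by rewrite (negbTE neqUV) /=; ring.
  by case: (x == V) => /=; ring.
have [xU|_] := eqVneq x U.
  by rewrite xU in nxy *; rewrite [y == U]eq_sym (negbTE nxy) (negbTE neqUV) /=; ring.
have [xV|_] := eqVneq x V.
  by rewrite xV in nxy *; rewrite [y == V]eq_sym (negbTE nxy) /=; ring.
by rewrite /=; ring.
Qed.

(* On span{U, V} the identity is [k |u><u| + k |u'><u'|], where [u' = (conj q, - conj p)]
   is orthogonal to [u]. *)
Lemma idop_sub_proj_ket2 (k : R) p q : k%:C * (p * p^* + q * q^*) = 1 ->
  opsub idop (opscale k%:C (proj (ket2 U V p q))) =2
  fun x y => opscale k%:C (proj (ket2 U V q^* (- p^*))) x y +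
    \sum_b opscale (((b != U) && (b != V))%:R : R)%:C (proj (bket b)) x y.
Proof.
move=> k_norm x y.
have -> : \sum_b opscale (((b != U) && (b != V))%:R : R)%:C (proj (bket b)) x y =
          ((x != U) && (x != V))%:R * (x == y)%:R.
  rewrite (bigD1 x) //= big1 => [|b /negbTE nbx]; last first.
    by rewrite /opscale /proj /bket [x == b]eq_sym nbx mul0r mulr0.
  by rewrite /opscale /proj /bket eqxx conjC_nat mul1r addr0 realc_nat [y == x]eq_sym.
rewrite /opsub /opscale /proj /ket2 /idop {1}(natr_eq_split2 x y).
rewrite !conjCD !conjCM !conjCN !conjC_nat !conjCK; apply/subr0_eq.
transitivity (((x == U)%:R * (y == U)%:R + (x == V)%:R * (y == V)%:R) *
  (1 - k%:C * (p * p^* + q * q^*))); first by ring.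
by rewrite k_norm subrr mulr0.
Qed.

End Ket2.

(* Correlator of [(k |u><u|, I - k |u><u|)] and [(l |w><w|, I - l |w><w|)] for
   [u = (p1, p2)] and [w = (q1, q2)] on two levels with real weights [a] and [b]. *)
Definition ket2_correl (R : realFieldType) (a b k l p1 p2 q1 q2 : R) : R :=
  4 * k * l * (p1 * q1 * a + p2 * q2 * b) ^+ 2
  - 2 * k * (p1 ^+ 2 * a ^+ 2 + p2 ^+ 2 * b ^+ 2)
  - 2 * l * (q1 ^+ 2 * a ^+ 2 + q2 ^+ 2 * b ^+ 2) + 1.

Lemma ket2_correl_chsh (R : realFieldType) (a b c s : R) :
  0 <= c -> c ^+ 2 + s ^+ 2 = 1 ->
  let l := 1 / (2 * c + 2) in
  ket2_correl a b 1 l 1 0 (c + 1) s + ket2_correl a b 1 l 1 0 (c + 1) (- s) +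
  ket2_correl a b (1 / 2) l 1 1 (c + 1) s - ket2_correl a b (1 / 2) l 1 1 (c + 1) (- s) =
  2 * c * (a ^+ 2 + b ^+ 2) - 2 * (a ^+ 2 + b ^+ 2) + 2 + 4 * a * b * s.
Proof.
move=> c_ge0 cs1 l.
have l_inv : l * (2 * c + 2) = 1.
  by rewrite /l div1r mulVf // gt_eqF // ltr_wpDl // mulr_ge0.
apply/eqP; rewrite -subr_eq0; apply/eqP.
transitivity ((l * (2 * c + 2) - 1) *
    (2 * (c + 1) * a ^+ 2 + 4 * a * b * s - 2 * (1 - c) * b ^+ 2)
  - 4 * l * (c ^+ 2 + s ^+ 2 - 1) * b ^+ 2); first by rewrite /ket2_correl; field.
by rewrite l_inv cs1 !subrr mul0r mulr0 mul0r subrr.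
Qed.

Lemma unit_modulus_neq0 (C : numClosedFieldType) (z : C) : z * z^* = 1 -> z != 0.
Proof. by apply: contra_eq_neq => ->; rewrite mul0r eq_sym oner_neq0. Qed.

Definition meas2_of (R : realType) (d : nat) (P : op R (DA d)) : meas2 R d :=
  (P, opsub idop P).

Section TwoCopies.
Variables (R : realType) (d : nat) (r : 'I_d) (alpha : 'I_d -> R[i]).
Local Notation rho := (two_copies r alpha).
Local Notation psi := (psi r alpha).

Definition expect2 (P Q : op R (DA d)) : R[i] :=
  trace (opmul (aliceD1A2_bobD2A1 P Q) rho).

(* [<u (x) w | Psi>] with [u] living on D1A2 and [w] on D2A1. *)
Definition overlap (u w : ket R (DA d)) : R[i] :=
  \sum_(z : DA d * DA d) (u (z.1.1, z.2.2) * w (z.2.1, z.1.2))^* * tens psi psi z.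

(* Amplitude of the two-copy state with D1A2 in state [x] and D2A1 in state [y]. *)
Definition psiAB (x y : DA d) : R[i] := psi (x.1, y.2) * psi (y.1, x.2).

Lemma expect2_proj (k l : R[i]) (u w : ket R (DA d)) P Q :
  P =2 opscale k (proj u) -> Q =2 opscale l (proj w) ->
  expect2 P Q = k * l * (overlap u w * (overlap u w)^*).
Proof.
move=> PE QE; rewrite (mulrC (overlap u w)) /overlap rmorph_sum mulr_suml mulr_sumr.
apply: eq_bigr => x _; rewrite !mulr_sumr; apply: eq_bigr => z _.
rewrite /aliceD1A2_bobD2A1 PE QE /= /opscale /proj /two_copies /proj /tens.
by rewrite !conjCM !conjCK; ring.
Qed.

Lemma expect2_suml (I : finType) (N : I -> op R (DA d)) P Q :
  P =2 (fun x y => \sum_b N b x y) -> expect2 P Q = \sum_b expect2 (N b) Q.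
Proof.
move=> PE; rewrite exchange_big; apply: eq_bigr => x _.
rewrite exchange_big; apply: eq_bigr => z _.
by rewrite /aliceD1A2_bobD2A1 PE !mulr_suml.
Qed.

Lemma expect2_sumr (I : finType) (N : I -> op R (DA d)) P Q :
  Q =2 (fun x y => \sum_b N b x y) -> expect2 P Q = \sum_b expect2 P (N b).
Proof.
move=> QE; rewrite exchange_big; apply: eq_bigr => x _.
rewrite exchange_big; apply: eq_bigr => z _.
by rewrite /aliceD1A2_bobD2A1 QE mulr_sumr !mulr_suml.
Qed.

Lemma expect2_subl A B Q : expect2 (opsub A B) Q = expect2 A Q - expect2 B Q.
Proof.
rewrite -sumrB; apply: eq_bigr => x _; rewrite -sumrB; apply: eq_bigr => z _.
by rewrite /aliceD1A2_bobD2A1 /opsub; ring.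
Qed.

Lemma expect2_subr P A B : expect2 P (opsub A B) = expect2 P A - expect2 P B.
Proof.
rewrite -sumrB; apply: eq_bigr => x _; rewrite -sumrB; apply: eq_bigr => z _.
by rewrite /aliceD1A2_bobD2A1 /opsub; ring.
Qed.

Lemma sum_regroup (F : DA d * DA d -> R[i]) :
  \sum_z F z = \sum_(x : DA d) \sum_(y : DA d) F ((x.1, y.2), (y.1, x.2)).
Proof.
pose regroup (z : DA d * DA d) : DA d * DA d := ((z.1.1, z.2.2), (z.2.1, z.1.2)).
have regroupK : involutive regroup by case=> [[a b] [c e]].
rewrite pair_bigA (reindex_inj (inv_inj regroupK)) /=.
by apply: eq_bigr => [[[a b] [c e]]].
Qed.

Lemma overlapE u w :
  overlap u w = \sum_x (u x)^* * \sum_y (w y)^* * psiAB x y.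
Proof.
rewrite /overlap sum_regroup; apply: eq_bigr => [[a b] _]; rewrite mulr_sumr.
by apply: eq_bigr => [[c e] _]; rewrite conjCM /tens /psiAB /=; ring.
Qed.

Lemma overlap_bket a b : overlap (bket a) (bket b) = psiAB a b.
Proof. by rewrite overlapE sum_conj_bket sum_conj_bket. Qed.

Definition pbasis (s : 'I_d) : DA d := (s, oplus s r).

Lemma oplus_inj : injective (fun s : 'I_d => oplus s r).
Proof.
move=> s t /(congr1 val) /= /eqP; rewrite eqn_modDr => /eqP.
by rewrite !modn_small // => /val_inj.
Qed.

Lemma pbasis0 (s : 'I_d) : s = 0%N :> nat -> pbasis s = (s, r).
Proof. by move=> s0; congr pair; apply/val_inj; rewrite /= s0 add0n modn_small. Qed.

Lemma pbasis_neq s t : s != t -> pbasis s != pbasis t.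
Proof. by move=> nst; rewrite /pbasis xpair_eqE negb_and nst. Qed.

Lemma ket2_pbasis_in_parity s t (p q : R[i]) :
  in_parity r (ket2 (pbasis s) (pbasis t) p q).
Proof.
move=> s' t' nt'; rewrite /ket2 /pbasis !xpair_eqE.
have off v : (s' == v) && (t' == oplus v r) = false.
  by apply/negbTE; apply: contra nt' => /andP[/eqP <- ->].
by rewrite !off !mul0r addr0.
Qed.

Lemma psiAB_pbasis_l s y : psiAB (pbasis s) y = (y == pbasis s)%:R * alpha s ^+ 2.
Proof.
case: y => a b; rewrite /psiAB /psi /pbasis /= xpair_eqE.
have [->|nas] := eqVneq a s.
  by rewrite eqxx /=; case: (b == _); rewrite ?mul1r ?mulr0 ?mul0r ?expr2.
by rewrite /= mul0r (inj_eq oplus_inj) [s == a]eq_sym (negbTE nas) mulr0.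
Qed.

Lemma psiAB_pbasis_r s x : psiAB x (pbasis s) = (x == pbasis s)%:R * alpha s ^+ 2.
Proof.
case: x => a b; rewrite /psiAB /psi /pbasis /= xpair_eqE.
have [->|nas] := eqVneq a s.
  by rewrite eqxx /=; case: (b == _); rewrite ?mul1r ?mulr0 ?mul0r ?expr2.
by rewrite /= mul0r (inj_eq oplus_inj) [s == a]eq_sym (negbTE nas) mul0r.
Qed.

Lemma sum_psi_mul_conj : \sum_x psi x * (psi x)^* = \sum_(s < d) `|alpha s| ^+ 2.
Proof.
rewrite -(pair_bigA _ (fun s t => psi (s, t) * (psi (s, t))^*)) /=.
apply: eq_bigr => s _; rewrite (bigD1 (oplus s r)) //= big1 => [|t /negbTE nt].
  by rewrite /psi /= eqxx addr0 normCK.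
by rewrite /psi /= nt mul0r.
Qed.

Lemma expect2_idop_idop : \sum_(s < d) `|alpha s| ^+ 2 = 1 -> expect2 idop idop = 1.
Proof.
move=> norm1; rewrite (expect2_suml _ (@idop_sum_proj _ _)).
under eq_bigr => a _ do rewrite (expect2_sumr _ (@idop_sum_proj _ _)).
under eq_bigr => a _ do under eq_bigr => b _ do
  rewrite (expect2_proj (opscale1 _) (opscale1 _)) overlap_bket mul1r.
transitivity ((\sum_x psi x * (psi x)^*) * (\sum_x psi x * (psi x)^*)).
  rewrite big_distrlr /= pair_bigA sum_regroup.
  by apply: eq_bigr => a _; apply: eq_bigr => b _; rewrite /psiAB conjCM; ring.
by rewrite sum_psi_mul_conj norm1 mulr1.
Qed.

Lemma correl_meas2_of P Q :
  correl (meas2_of P) (meas2_of Q) rho =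
  4 * expect2 P Q - 2 * expect2 P idop - 2 * expect2 idop Q + expect2 idop idop.
Proof.
rewrite /correl !big_bool /= /prob /= -!/(expect2 _ _).
by rewrite !expect2_subl !expect2_subr /sgnb; ring.
Qed.

Section TwoLevels.
Variables (i j : 'I_d).
Hypothesis neq_ij : i != j.
Local Notation Ui := (pbasis i).
Local Notation Uj := (pbasis j).
Let neqU : Ui != Uj := pbasis_neq neq_ij.

Lemma overlap_ket2 p1 p2 q1 q2 :
  overlap (ket2 Ui Uj p1 p2) (ket2 Ui Uj q1 q2) =
  p1^* * q1^* * alpha i ^+ 2 + p2^* * q2^* * alpha j ^+ 2.
Proof.
rewrite overlapE sum_conj_ket2 // !sum_conj_ket2 // !psiAB_pbasis_l.
by rewrite !eqxx (negbTE neqU) [Uj == Ui]eq_sym (negbTE neqU) /=; ring.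
Qed.

Lemma overlap_ket2_bket p1 p2 b :
  overlap (ket2 Ui Uj p1 p2) (bket b) =
  ket2 Ui Uj (p1^* * alpha i ^+ 2) (p2^* * alpha j ^+ 2) b.
Proof.
by rewrite overlapE sum_conj_ket2 // !sum_conj_bket !psiAB_pbasis_l /ket2; ring.
Qed.

Lemma overlap_bket_ket2 q1 q2 a :
  overlap (bket a) (ket2 Ui Uj q1 q2) =
  ket2 Ui Uj (q1^* * alpha i ^+ 2) (q2^* * alpha j ^+ 2) a.
Proof.
by rewrite overlapE sum_conj_bket sum_conj_ket2 // !psiAB_pbasis_r /ket2; ring.
Qed.

Lemma expect2_ket2_idop k p1 p2 P :
  P =2 opscale k (proj (ket2 Ui Uj p1 p2)) ->
  expect2 P idop = k * ((p1^* * alpha i ^+ 2) * (p1^* * alpha i ^+ 2)^* +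
                        (p2^* * alpha j ^+ 2) * (p2^* * alpha j ^+ 2)^*).
Proof.
move=> PE; rewrite (expect2_sumr _ (@idop_sum_proj _ _)).
under eq_bigr => b _.
  rewrite (expect2_proj PE (opscale1 _)) overlap_ket2_bket mulr1.
over.
by rewrite -mulr_sumr sum_ket2_mul_conj.
Qed.

Lemma expect2_idop_ket2 l q1 q2 Q :
  Q =2 opscale l (proj (ket2 Ui Uj q1 q2)) ->
  expect2 idop Q = l * ((q1^* * alpha i ^+ 2) * (q1^* * alpha i ^+ 2)^* +
                        (q2^* * alpha j ^+ 2) * (q2^* * alpha j ^+ 2)^*).
Proof.
move=> QE; rewrite (expect2_suml _ (@idop_sum_proj _ _)).
under eq_bigr => a _.
  rewrite (expect2_proj (opscale1 _) QE) overlap_bket_ket2 mul1r.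
over.
by rewrite -mulr_sumr sum_ket2_mul_conj.
Qed.

Lemma valid_meas2_ket2 (k : R) (p q : R[i]) P :
  0 < k -> k%:C * (p * p^* + q * q^*) = 1 ->
  P =2 opscale k%:C (proj (ket2 Ui Uj p q)) -> valid_meas2 (meas2_of P).
Proof.
move=> k_gt0 k_norm PE.
have kV_gt0 : 0 < k^-1 by rewrite invr_gt0.
have norm_kV : p * p^* + q * q^* = (k^-1)%:C.
  have kC_neq0 : k%:C != 0 by rewrite fmorph_eq0 gt_eqF.
  by rewrite realcV -[LHS]mul1r -(mulVf kC_neq0) -mulrA k_norm mulr1.
split; [|split]; rewrite /meas2_of /=.
- apply: pure_cone11_ext PE (pure_cone11_proj (ltW k_gt0) kV_gt0 (ket2_pbasis_in_parity _ _ _ _) _).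
  by rewrite knorm2_ket2.
- pose c b : R := ((b != Ui) && (b != Uj))%:R.
  have E : opsub idop P =2 fun x y => opscale k%:C (proj (ket2 Ui Uj q^* (- p^*))) x y +
                          \sum_b opscale (c b)%:C (proj (bket b)) x y.
    by move=> x y; rewrite -(idop_sub_proj_ket2 neqU k_norm) /opsub PE.
  apply: pure_cone11_ext E (pure_cone11D _ (pure_cone11_sum _)).
    apply: (pure_cone11_proj (ltW k_gt0) kV_gt0 (ket2_pbasis_in_parity _ _ _ _)).
    by rewrite knorm2_ket2 // -norm_kV conjCN !conjCK; ring.
  move=> b; have [kb b_par] := bket_in_parity R b.
  by apply: (pure_cone11_proj _ ltr01 b_par); rewrite ?ler0n ?knorm2_bket.
- by move=> x y; rewrite /opsub addrC subrK.
Qed.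

Section Phases.
Variables (e om : R[i]) (a b : R).
Hypotheses (norm1 : \sum_(s < d) `|alpha s| ^+ 2 = 1)
  (e_unit : e * e^* = 1) (om_unit : om * om^* = 1)
  (alpha_i : alpha i ^+ 2 = a%:C * e) (alpha_j : alpha j ^+ 2 = b%:C * e * om).

Lemma correl_ket2 (k l p1 p2 q1 q2 : R) P Q :
  P =2 opscale k%:C (proj (ket2 Ui Uj p1%:C p2%:C)) ->
  Q =2 opscale l%:C (proj (ket2 Ui Uj q1%:C (om * q2%:C))) ->
  correl (meas2_of P) (meas2_of Q) rho = (ket2_correl a b k l p1 p2 q1 q2)%:C.
Proof.
move=> PE QE; have e_neq0 := unit_modulus_neq0 e_unit.
have om_neq0 := unit_modulus_neq0 om_unit.
rewrite correl_meas2_of (expect2_proj PE QE) overlap_ket2 (expect2_ket2_idop PE).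
rewrite (expect2_idop_ket2 QE) expect2_idop_idop // alpha_i alpha_j.
rewrite !conjCD !conjCM !conjCK !conjC_real -(mulr1_eq e_unit) -(mulr1_eq om_unit).
rewrite /ket2_correl !(realcD, realcN, realcM, realcX, realc_nat) rmorph1.
by field; rewrite e_neq0 om_neq0.
Qed.

Lemma chsh_ket2 (c s : R) P0 P1 Q0 Q1 :
  0 <= c -> c ^+ 2 + s ^+ 2 = 1 ->
  P0 =2 opscale 1%:C (proj (ket2 Ui Uj 1%:C 0%:C)) ->
  P1 =2 opscale (1 / 2)%:C (proj (ket2 Ui Uj 1%:C 1%:C)) ->
  Q0 =2 opscale (1 / (2 * c + 2))%:C (proj (ket2 Ui Uj (c + 1)%:C (om * s%:C))) ->
  Q1 =2 opscale (1 / (2 * c + 2))%:C (proj (ket2 Ui Uj (c + 1)%:C (om * (- s)%:C))) ->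
  [/\ valid_meas2 (meas2_of P0), valid_meas2 (meas2_of P1),
      valid_meas2 (meas2_of Q0), valid_meas2 (meas2_of Q1) &
   CHSH (meas2_of P0) (meas2_of P1) (meas2_of Q0) (meas2_of Q1) rho =
   (2 * c * (a ^+ 2 + b ^+ 2) - 2 * (a ^+ 2 + b ^+ 2) + 2 + 4 * a * b * s)%:C].
Proof.
move=> c_ge0 cs1 P0E P1E Q0E Q1E.
have cc_gt0 : 0 < 2 * c + 2 by rewrite ltr_wpDl // mulr_ge0.
have cs1' : (c + 1) ^+ 2 + s ^+ 2 = 2 * c + 2.
  have -> : (c + 1) ^+ 2 + s ^+ 2 = c ^+ 2 + s ^+ 2 + 2 * c + 1 by ring.
  by rewrite cs1; ring.
have Q_norm t : t ^+ 2 = s ^+ 2 -> (1 / (2 * c + 2))%:C *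
    ((c + 1)%:C * (c + 1)%:C^* + om * t%:C * (om * t%:C)^*) = 1.
  move=> ts; rewrite conjCM !conjC_real mulrACA om_unit [1 * (_ * _)]mul1r.
  rewrite -!realcM -realcD -realcM; apply: realc_eq1.
  by rewrite -!expr2 ts cs1' div1r mulVf // gt_eqF.
split.
- apply: valid_meas2_ket2 ltr01 _ P0E.
  by rewrite !conjC_real -!realcM -realcD -realcM; apply: realc_eq1; ring.
- apply: valid_meas2_ket2 _ _ P1E; first by rewrite divr_gt0.
  by rewrite !conjC_real -!realcM -realcD -realcM; apply: realc_eq1; field.
- by apply: valid_meas2_ket2 _ (Q_norm _ _) Q0E; rewrite ?divr_gt0.
- by apply: valid_meas2_ket2 _ (Q_norm _ _) Q1E; rewrite ?divr_gt0 ?sqrrN.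
rewrite /CHSH (correl_ket2 P0E Q0E) (correl_ket2 P0E Q1E).
rewrite (correl_ket2 P1E Q0E) (correl_ket2 P1E Q1E) -realcN -!realcD.
by rewrite (ket2_correl_chsh a b c_ge0 cs1).
Qed.

End Phases.
End TwoLevels.
End TwoCopies.

Definition chsh_bound (R : rcfType) (a b : R) : R :=
  2 + 2 * (a ^+ 2 + b ^+ 2) *
    (Num.sqrt (1 + 4 * a ^+ 2 * b ^+ 2 / (a ^+ 2 + b ^+ 2) ^+ 2) - 1).

Lemma chsh_bound_gt2 (R : rcfType) (a b : R) : 0 < a -> 0 < b -> 2 < chsh_bound a b.
Proof.
move=> a_gt0 b_gt0; have N_gt0 : 0 < a ^+ 2 + b ^+ 2 by rewrite addr_gt0 // exprn_gt0.
have q_gt0 : 0 < 4 * a ^+ 2 * b ^+ 2 / (a ^+ 2 + b ^+ 2) ^+ 2.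
  by rewrite divr_gt0 ?exprn_gt0 // !mulr_gt0 // exprn_gt0.
rewrite ltrDl mulr_gt0 ?mulr_gt0 // subr_gt0 -{1}sqrtr1 ltr_sqrt ?ltrDl //.
by rewrite addr_gt0.
Qed.

Lemma chsh_value_bound (R : rcfType) (a b c s : R) :
  0 < a -> 0 < b -> c ^+ 2 + s ^+ 2 = 1 -> 0 <= c ->
  s / c = 2 * a * b / (a ^+ 2 + b ^+ 2) ->
  2 * c * (a ^+ 2 + b ^+ 2) - 2 * (a ^+ 2 + b ^+ 2) + 2 + 4 * a * b * s = chsh_bound a b.
Proof.
move=> a_gt0 b_gt0 cs1 c_ge0 sc; rewrite /chsh_bound.
set N := a ^+ 2 + b ^+ 2 in sc *; set sg := 2 * a * b / N in sc *.
have N_gt0 : 0 < N by rewrite addr_gt0 // exprn_gt0.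
have -> : 4 * a ^+ 2 * b ^+ 2 / N ^+ 2 = sg ^+ 2.
  by rewrite /sg expr_div_n !exprMn -natrX.
have c_neq0 : c != 0.
  apply: contra_eq_neq sc => ->; rewrite invr0 mulr0 eq_sym gt_eqF //.
  by rewrite /sg !mulr_gt0 ?invr_gt0.
have sE : s = sg * c by rewrite -sc divfK.
have cc1 : c ^+ 2 * (1 + sg ^+ 2) = 1.
  by rewrite mulrDr mulr1 -exprMn (mulrC c) -sE cs1.
(* [1 + tan^2 = 1 / cos^2] *)
have tE : Num.sqrt (1 + sg ^+ 2) = c * (1 + sg ^+ 2).
  apply/eqP; rewrite -(@eqrXn2 _ 2) ?sqrtr_ge0 ?mulr_ge0 ?addr_ge0 ?sqr_ge0 //.
  rewrite sqr_sqrtr ?addr_ge0 ?sqr_ge0 // [(c * _) ^+ 2]exprMn [X in _ * X]expr2.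
  by rewrite mulrA cc1 mul1r.
by rewrite tE sE /sg; field; rewrite gt_eqF.
Qed.

Lemma exists_cos_sin (R : rcfType) (q : R) :
  exists c s : R, [/\ 0 <= c, c ^+ 2 + s ^+ 2 = 1 & s / c = q].
Proof.
pose t := Num.sqrt (1 + q ^+ 2).
have t_gt0 : 0 < t by rewrite sqrtr_gt0 ltr_wpDr ?sqr_ge0.
have t2 : t ^+ 2 = 1 + q ^+ 2 by rewrite sqr_sqrtr // addr_ge0 ?sqr_ge0.
exists t^-1, (q / t); split; first by rewrite invr_ge0 ltW.
  by rewrite exprVn expr_div_n t2; field; rewrite gt_eqF // ltr_wpDr ?sqr_ge0.
by rewrite invrK divfK // gt_eqF.
Qed.

Lemma polar_decomposition (R : rcfType) (z : R[i]) :
  z != 0 -> exists a e, [/\ 0 < a, e * e^* = 1 & z = a%:C * e].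
Proof.
move=> z_neq0; have normz : (complex.Re `|z|)%:C = `|z| by rewrite RRe_real ?normr_real.
exists (complex.Re `|z|), (z / `|z|); split.
- by rewrite -ltcR normz rmorph0 normr_gt0.
- by rewrite -normCK normf_div normr_id divff ?normr_eq0 // expr1n.
- by rewrite normz mulrC divfK ?normr_eq0.
Qed.

Lemma cos_ge0_halfpi (R : realType) (x : R) : 0 < x <= pi / 2 -> 0 <= cos x.
Proof.
case/andP=> x_gt0 x_le; apply: cos_ge0_pihalf; rewrite x_le andbT.
by rewrite (le_trans _ (ltW x_gt0)) // oppr_le0 divr_ge0 ?pi_ge0.
Qed.

Lemma realc_Re_gt0 (R : rcfType) (z : R[i]) : 0 < z -> (complex.Re z)%:C = z.
Proof. by move=> z_gt0; rewrite RRe_real // gtr0_real. Qed.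

Lemma Re_gt0 (R : rcfType) (z : R[i]) : 0 < z -> 0 < complex.Re z.
Proof. by move=> z_gt0; rewrite -ltcR realc_Re_gt0 // rmorph0. Qed.

Lemma chsh_violation (R : realType) (d : nat) (r : 'I_d) (alpha : 'I_d -> R[i]) (i j : 'I_d) :
  i != j -> \sum_(s < d) `|alpha s| ^+ 2 = 1 -> alpha i != 0 -> alpha j != 0 ->
  exists A0 A1 B0 B1 : meas2 R d,
    [/\ valid_meas2 A0, valid_meas2 A1, valid_meas2 B0, valid_meas2 B1
      & 2 < CHSH A0 A1 B0 B1 (two_copies r alpha)].
Proof.
move=> neq_ij norm1 ai_neq0 aj_neq0.
have [a [eA [a_gt0 eA_unit Ai]]] := polar_decomposition (expf_neq0 2 ai_neq0).
have [b [eB [b_gt0 eB_unit Bj]]] := polar_decomposition (expf_neq0 2 aj_neq0).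
have [c [s [c_ge0 cs1 sc]]] := exists_cos_sin (2 * a * b / (a ^+ 2 + b ^+ 2)).
(* the relative phase of [alpha j ^+ 2] is carried by Bob's second level *)
pose om := eA^* * eB.
have om_unit : om * om^* = 1.
  by rewrite conjCM conjCK mulrACA [eA^* * _]mulrC eA_unit eB_unit mulr1.
have Bj' : alpha j ^+ 2 = b%:C * eA * om.
  by rewrite Bj /om mulrA -(mulrA _ eA) eA_unit mulr1.
pose P (k : R) p q := opscale k%:C (proj (ket2 (pbasis r i) (pbasis r j) p q)).
have [vA0 vA1 vB0 vB1 chsh_eq] := chsh_ket2 neq_ij norm1 eA_unit om_unit Ai Bj' c_ge0 cs1
  (P0 := P 1 1%:C 0%:C) (P1 := P (1 / 2) 1%:C 1%:C)
  (Q0 := P (1 / (2 * c + 2)) (c + 1)%:C (om * s%:C))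
  (Q1 := P (1 / (2 * c + 2)) (c + 1)%:C (om * (- s)%:C))
  (fun _ _ => erefl) (fun _ _ => erefl) (fun _ _ => erefl) (fun _ _ => erefl).
do 4!eexists; split; [exact: vA0 | exact: vA1 | exact: vB0 | exact: vB1 |].
by rewrite chsh_eq (chsh_value_bound a_gt0 b_gt0 cs1 c_ge0 sc) -realc_nat ltcR chsh_bound_gt2.
Qed.

Theorem mainTheorem4 (R : realType) (d : nat) (r : 'I_d) (alpha : 'I_d -> R[i]) :
  (2 <= d)%N ->
  \sum_(i < d) `|alpha i| ^+ 2 = 1 ->
  (exists i j : 'I_d, i != j /\ alpha i != 0 /\ alpha j != 0) ->
  (exists A0 A1 B0 B1 : meas2 R d,
      [/\ valid_meas2 A0, valid_meas2 A1, valid_meas2 B0, valid_meas2 B1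
        & 2 < CHSH A0 A1 B0 B1 (two_copies r alpha)]) /\
  (forall i0 i1 : 'I_d, nat_of_ord i0 = 0%N -> nat_of_ord i1 = 1%N ->
     0 < alpha i0 -> 0 < alpha i1 ->
     let a' : R := (complex.Re (alpha i0)) ^+ 2 in
     let b' : R := (complex.Re (alpha i1)) ^+ 2 in
     forall theta : R, 0 < theta <= pi / 2 ->
     tan theta = 2 * a' * b' / (a' ^+ 2 + b' ^+ 2) ->
     (* Alice's states on (D1,A2), Bob's on (D2,A1) *)
     let up    : ket R (DA d) := bket (i0, r) in
     let down  : ket R (DA d) := bket (i1, oplus i1 r) in
     let up'   : ket R (DA d) := bket (i0, r) in
     let down' : ket R (DA d) := bket (i1, oplus i1 r) in
     let u_plus  := kadd (kscale (cos theta + 1)%:C up') (kscale (sin theta)%:C down') in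
     let u_minus := ksub (kscale (cos theta + 1)%:C up') (kscale (sin theta)%:C down') in
     let a0 := proj up in
     let a1 := opscale (1 / 2) (proj (kadd up down)) in
     let b0 := opscale (1 / (2 * cos theta + 2))%:C (proj u_plus) in
     let b1 := opscale (1 / (2 * cos theta + 2))%:C (proj u_minus) in
     let A0 : meas2 R d := (a0, opsub idop a0) in
     let A1 : meas2 R d := (a1, opsub idop a1) in
     let B0 : meas2 R d := (b0, opsub idop b0) in
     let B1 : meas2 R d := (b1, opsub idop b1) in
     let F : R := 2 + 2 * (a' ^+ 2 + b' ^+ 2) *
        (Num.sqrt (1 + 4 * a' ^+ 2 * b' ^+ 2 / (a' ^+ 2 + b' ^+ 2) ^+ 2) - 1) in
     [/\ valid_meas2 A0, valid_meas2 A1, valid_meas2 B0, valid_meas2 B1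
       & CHSH A0 A1 B0 B1 (two_copies r alpha) = F%:C /\ 2 < F]).
Proof.
(* [2 <= d] is implied by the two distinct indices. *)
move=> _ norm1 [i [j [neq_ij [ai_neq0 aj_neq0]]]]; split.
  exact: chsh_violation neq_ij norm1 ai_neq0 aj_neq0.
move=> i0 i1 i0E i1E ai0_gt0 ai1_gt0 a' b' th th_range tan_th.
move=> up down up' down' u_plus u_minus a0 a1 b0 b1 A0 A1 B0 B1 F.
have neq_i01 : i0 != i1 by apply/eqP => i01; move: i0E; rewrite i01 i1E.
have pb0 := pbasis0 r i0E.
have one_unit : (1 : R[i]) * 1^* = 1 by rewrite conjC1 mulr1.
have Ai0 : alpha i0 ^+ 2 = a'%:C * 1 by rewrite mulr1 /a' realcX realc_Re_gt0.
have Ai1 : alpha i1 ^+ 2 = b'%:C * 1 * 1 by rewrite !mulr1 /b' realcX realc_Re_gt0.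
have c_ge0 := cos_ge0_halfpi th_range.
have a0E : a0 =2 opscale 1%:C (proj (ket2 (pbasis r i0) (pbasis r i1) 1%:C 0%:C)).
  move=> x y; rewrite /a0 /up /opscale /proj /ket2 /bket pb0 /pbasis rmorph1 rmorph0.
  by rewrite !mulr1 !mulr0 !addr0 mul1r.
have a1E : a1 =2 opscale (1 / 2)%:C (proj (ket2 (pbasis r i0) (pbasis r i1) 1%:C 1%:C)).
  move=> x y; rewrite /a1 /up /down /opscale /proj /kadd /ket2 /bket pb0 /pbasis.
  by rewrite rmorph1 !mulr1 !div1r realcV realc_nat.
have b0E : b0 =2 opscale (1 / (2 * cos th + 2))%:C
    (proj (ket2 (pbasis r i0) (pbasis r i1) (cos th + 1)%:C (1 * (sin th)%:C))).
  move=> x y; rewrite /b0 /u_plus /up' /down' /opscale /proj /kadd /kscale /ket2 /bket.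
  by rewrite pb0 /pbasis mul1r !conjCD !conjCM; ring.
have b1E : b1 =2 opscale (1 / (2 * cos th + 2))%:C
    (proj (ket2 (pbasis r i0) (pbasis r i1) (cos th + 1)%:C (1 * (- sin th)%:C))).
  move=> x y; rewrite /b1 /u_minus /up' /down' /opscale /proj /ksub /kscale /ket2 /bket.
  by rewrite pb0 /pbasis mul1r realcN !conjCD !conjCN !conjCM; ring.
have [vA0 vA1 vB0 vB1 chsh_eq] := chsh_ket2 neq_i01 norm1 one_unit one_unit Ai0 Ai1 c_ge0
  (cos2Dsin2 th) a0E a1E b0E b1E.
split=> //; split; last by apply: chsh_bound_gt2; rewrite exprn_gt0 ?Re_gt0.
by rewrite chsh_eq (chsh_value_bound _ _ (cos2Dsin2 th) c_ge0) ?exprn_gt0 ?Re_gt0.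
Qed.
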